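(* Let $X$ be a topological space and $x\in X$ a point such that $\overline{U}=X$ for every open neighborhood $U$ of $x$. If $M$ is a maximal finitely non-Hausdorff subset of $X$, then $x\in M$.
   Context: A non-empty subset $A$ of $X$ is finitely non-Hausdorff if for every non-empty finite $F\subseteq A$ and every family $\{U_y:y\in F\}$ of open neighborhoods $U_y$ of $y$, $\bigcap_{y\in F}U_y\neq\emptyset$; it is maximal finitely non-Hausdorff if no finitely non-Hausdorff subset of $X$ properly contains it. *)

From HB Require Import structures.
From mathcomp Require Import all_boot all_order.
From mathcomp Require Import all_classical all_reals all_analysis.
Set Implicit Arguments. Unset Strict Implicit. Unset Printing Implicit Defensive.
Local Open Scope classical_set_scope.

Definition finitely_non_Hausdorff (X : topologicalType) (A : set X) : Prop :=
  A !=set0 /\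
  forall (F : set X) (U : X -> set X),
    finite_set F -> F `<=` A -> F !=set0 ->
    (forall y, F y -> open (U y) /\ U y y) ->
    (\bigcap_(y in F) U y) !=set0.

Definition maximal_finitely_non_Hausdorff (X : topologicalType) (A : set X) : Prop :=
  finitely_non_Hausdorff A /\
  forall B : set X, finitely_non_Hausdorff B -> A `<=` B -> B = A.

From HB Require Import structures.
From mathcomp Require Import all_boot all_order.
From mathcomp Require Import all_classical all_reals all_analysis.
Local Open Scope classical_set_scope.

(* Adding x to a finitely non-Hausdorff set A keeps it finitely non-Hausdorff:
   the neighbourhoods of the points of A in a finite family meet in a
   neighbourhood of some point, and the dense neighbourhood of x meets it.
   By maximality, M already contains x. *)

Lemma nbhs_finite_bigcap (T : topologicalType) (I : choiceType) (F : set I)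
    (U : I -> set T) (w : T) :
  finite_set F -> (forall i, F i -> open (U i)) ->
  (\bigcap_(i in F) U i) w -> nbhs w (\bigcap_(i in F) U i).
Proof.
move=> /finite_fsetP[D ->] Uo Uw; apply: filter_bigI => i Di.
by apply: open_nbhs_nbhs; split; [exact: Uo | exact: Uw].
Qed.

Lemma finitely_non_Hausdorff_setU1 (X : topologicalType) (x : X) (A : set X) :
  (forall U : set X, open U -> U x -> closure U = setT) ->
  finitely_non_Hausdorff A -> finitely_non_Hausdorff (x |` A).
Proof.
move=> x_dense [_ hA]; split; first by exists x; left.
move=> F U Ffin FxA F0 hU.
have [Fx|nFx] := pselect (F x); last first.
  apply: hA => // y Fy; case: (FxA y Fy) => // yx.
  by move: Fy; rewrite yx.
have [Uxo Uxx] := hU x Fx.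
rewrite (@bigcap_setD1 _ _ x U F Fx).
have FA : F `\ x `<=` A.
  by move=> y [Fy nyx]; case: (FxA y Fy).
have [->|/set0P F'0] := eqVneq (F `\ x) set0.
  by exists x; rewrite bigcap_set0 setIT.
have F'fin : finite_set (F `\ x) by exact: finite_setD.
have [w Fw] := hA _ U F'fin FA F'0 (fun y Fy => hU y Fy.1).
have Fw_nbhs : nbhs w (\bigcap_(y in F `\ x) U y).
  by apply: nbhs_finite_bigcap => // y Fy; case: (hU y Fy.1).
have Uxw : closure (U x) w by rewrite (x_dense _ Uxo Uxx).
exact: Uxw _ Fw_nbhs.
Qed.

Theorem lemma2p20 (X : topologicalType) (x : X) (M : set X) :
  (forall U : set X, open U -> U x -> closure U = setT) ->
  maximal_finitely_non_Hausdorff M ->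
  M x.
Proof.
move=> x_dense [fnhM maxM].
have <- : x |` M = M.
  by apply: maxM; [exact: finitely_non_Hausdorff_setU1 | exact: subsetUr].
by left.
Qed.
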